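(* Let $(x_k)$ be a bounded sequence in a real Banach space $X$, let $x\in X$ and $c>0$, and suppose that $(x_k-x)$ generates an $\ell_1$-spreading model with constant $c$. Then $\widetilde{\operatorname{cca}}(x_{k^3})\ge 2c$, where $(x_{k^3})_{k\ge1}$ is the subsequence $x_1,x_8,x_{27},\dots$.
   Context: A bounded sequence $(y_k)$ generates an $\ell_1$-spreading model with constant $\delta>0$ if $\|\sum_{i\in F}\alpha_i y_i\|\ge\delta\sum_{i\in F}|\alpha_i|$ for every finite $F\subset\mathbb N$ with $\#F\le\min F$ and all real scalars $(\alpha_i)_{i\in F}$. $\operatorname{ca}(y_k)=\inf_{n}\sup\{\|y_k-y_l\|: k,l\ge n\}$, $\operatorname{cca}(y_k)=\operatorname{ca}(\frac1k\sum_{i=1}^k y_i)$, $\widetilde{\operatorname{cca}}(y_k)=\inf\{\operatorname{cca}(y_{k_n}) : (y_{k_n})\text{ a subsequence of }(y_k)\}$. *)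

(* Sequences are 1-indexed as in the paper:
   a sequence is [x : nat -> X] and only the values x k for k >= 1 are used
   (x 0 is a junk value that plays no role). *)
From HB Require Import structures.
From mathcomp Require Import all_boot all_order all_algebra.
From mathcomp Require Import all_classical all_reals all_analysis.
Set Implicit Arguments. Unset Strict Implicit. Unset Printing Implicit Defensive.
Import Order.TTheory GRing.Theory Num.Theory.
Import numFieldNormedType.Exports.
Local Open Scope classical_set_scope.
Local Open Scope ring_scope.

Section Defs.
Context {R : realType} {X : normedModType R}.

(* (y_k)_{k>=1} generates an l1-spreading model with constant delta:
   for every finite F of positive integers with #F <= min F (i.e. #F <= i for
   every i in F) and all real scalars a_i. *)
Definition l1_spreading_model (y : nat -> X) (delta : R) : Prop :=
  delta > 0 /\
  forall (F : seq nat) (a : nat -> R),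
    uniq F -> all (fun i => (0 < i)%N) F ->
    (forall i, i \in F -> (size F <= i)%N) ->
    delta * \sum_(i <- F) `|a i| <= `|\sum_(i <- F) a i *: y i|.

Definition ca (y : nat -> X) : \bar R :=
  ereal_inf [set ereal_sup [set (`|y k - y l|)%:E | k in [set k | (n <= k)%N]
                                               & l in [set l | (n <= l)%N]]
            | n in [set n | (0 < n)%N]].

Definition cesaro (y : nat -> X) : nat -> X :=
  fun k => (k%:R)^-1 *: \sum_(1 <= i < k.+1) y i.

Definition cca (y : nat -> X) : \bar R := ca (cesaro y).

Definition ccat (y : nat -> X) : \bar R :=
  ereal_inf [set cca (y \o phi) | phi in [set phi : nat -> nat | forall n, (phi n < phi n.+1)%N]].

End Defs.

From Pilot Require Import Defs.
From HB Require Import structures.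
From mathcomp Require Import all_boot all_order all_algebra.
From mathcomp Require Import all_classical all_reals all_analysis.
From mathcomp Require Import zify ring lra.
Import Order.TTheory GRing.Theory Num.Theory.
Import numFieldNormedType.Exports.
Local Open Scope classical_set_scope.
Local Open Scope ring_scope.

(* Put y := x - x0 and let g i := phi(i)^3 >= i^3 index a subsequence of
   (x_{k^3}).  The difference of the Cesaro means of (y_{g i}) at l = j^6 and
   k = j^3 is sum_i w_i y_{g i} with w_i = 1/l - [i <= k]/k.  The m - 1 = j^2
   first terms contribute at most j^2 B / j^3 = B / j; the remaining
   l + 1 - m <= m^3 <= g i terms are admissible for the spreading model, so
   their norm is at least c sum |w_i| >= c (2 - 3/j).  Translating by x0 does
   not change differences of Cesaro means, so cca >= 2c along every
   subsequence. *)

Lemma cube_weights_ge {R : realFieldType} (c B J : R) : 0 < c -> 2 <= J ->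
  2 * c - (3 * c + B) / J <=
  c * ((J ^+ 3 - J ^+ 2) * ((J ^+ 3)^-1 - (J ^+ 6)^-1) + (J ^+ 6 - J ^+ 3) * (J ^+ 6)^-1)
    - J ^+ 2 * ((J ^+ 3)^-1 * B).
Proof.
move=> c0 J2; have J0 : J != 0 by rewrite gt_eqF //; lra.
set t := J^-1; have t0 : 0 < t by rewrite invr_gt0; lra.
have t1 : t <= 1 by rewrite invf_le1; lra.
have -> : 2 * c - (3 * c + B) / J = 2 * c - 3 * c * t - t * B by rewrite /t; field.
have -> : c * ((J ^+ 3 - J ^+ 2) * ((J ^+ 3)^-1 - (J ^+ 6)^-1)
    + (J ^+ 6 - J ^+ 3) * (J ^+ 6)^-1) - J ^+ 2 * ((J ^+ 3)^-1 * B)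
    = c * (2 - t - 2 * t ^+ 3 + t ^+ 4) - t * B by rewrite /t; field.
have t3 : t ^+ 3 <= t by rewrite -[leRHS]expr1 ler_wiXn2l //; lra.
have t4 : 0 <= t ^+ 4 by rewrite exprn_ge0 //; lra.
nra.
Qed.

Lemma nat_large_div_le {R : archiFieldType} {a e : R} n : 0 <= a -> 0 < e ->
  exists2 j, (maxn n 2 <= j)%N & a / j%:R <= e.
Proof.
move=> a0 e0; have := archi_boundP (divr_ge0 a0 (ltW e0)).
set N := Num.Def.archi_bound _ => aN.
exists (maxn (maxn n 2) N); first exact: leq_maxl.
have jN : N%:R <= (maxn (maxn n 2) N)%:R :> R by rewrite ler_nat leq_maxr.
rewrite ler_pdivrMr ?ltr0n; last by lia.
by rewrite ltr_pdivrMr // in aN; nra.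
Qed.

Section CesaroSpreading.
Context {R : realType} {X : normedModType R}.
Implicit Types (y z : nat -> X) (c B : R).

Lemma l1_spreading_model_inj y c (g : nat -> nat) (s : seq nat) (b : nat -> R) :
  l1_spreading_model y c -> injective g -> uniq s ->
  (forall i, i \in s -> (0 < g i)%N && (size s <= g i)%N) ->
  c * \sum_(i <- s) `|b i| <= `|\sum_(i <- s) b i *: y (g i)|.
Proof.
move=> [_ spread] g_inj s_uniq s_adm.
set h := pinv [set: nat] g.
have gK : cancel g h.
  by move=> i; apply: pinvKV; [move=> ? ? _ _; exact: g_inj | rewrite in_setT].
have := spread (map g s) (b \o h); rewrite !big_map /=.
under eq_bigr do rewrite gK; under [X in _ <= `|X|]eq_bigr do rewrite gK.
apply; first by rewrite map_inj_uniq.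
- by apply/allP => _ /mapP[i si ->]; case/andP: (s_adm i si).
- by move=> _ /mapP[i si ->]; rewrite size_map; case/andP: (s_adm i si).
Qed.

Definition cesaro_weight (k l i : nat) : R :=
  l%:R^-1 - (if (i <= k)%N then k%:R^-1 else 0).

Lemma cesaro_sub z k l : (k <= l)%N ->
  Defs.cesaro z l - Defs.cesaro z k = \sum_(1 <= i < l.+1) cesaro_weight k l i *: z i.
Proof.
move=> kl; rewrite /Defs.cesaro /cesaro_weight.
under [RHS]eq_bigr do rewrite scalerBl.
rewrite sumrB -scaler_sumr; congr (_ - _).
rewrite [RHS](big_cat_nat _ (n := k.+1)) //= [X in _ = _ + X]big1_seq ?addr0.
  rewrite scaler_sumr; apply: eq_big_nat => i /andP[_ ik].
  by rewrite -ltnS ik.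
move=> i /andP[_]; rewrite mem_index_iota => /andP[ki _].
by rewrite leqNgt ki scale0r.
Qed.

Lemma norm_cesaro_weight_le k l i : (0 < k <= l)%N ->
  `|cesaro_weight k l i| <= k%:R^-1.
Proof.
case/andP=> k0 kl; have lk : l%:R^-1 <= k%:R^-1 :> R.
  by rewrite lef_pV2 ?posrE ?ltr0n ?ler_nat //; lia.
have l0 : 0 <= l%:R^-1 :> R by rewrite invr_ge0.
rewrite /cesaro_weight; case: ifP => _; last by rewrite subr0 ger0_norm.
by rewrite distrC ger0_norm ?subr_ge0 // gerBl.
Qed.

Lemma sum_norm_cesaro_weight m k l : (m <= k.+1)%N -> (0 < k <= l)%N ->
  \sum_(m <= i < l.+1) `|cesaro_weight k l i|
  = (k.+1 - m)%:R * (k%:R^-1 - l%:R^-1) + (l - k)%:R * l%:R^-1.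
Proof.
move=> mk /andP[k0 kl]; have lk : l%:R^-1 <= k%:R^-1 :> R.
  by rewrite lef_pV2 ?posrE ?ltr0n ?ler_nat //; lia.
rewrite (big_cat_nat _ (n := k.+1)) //=.
have -> : \sum_(m <= i < k.+1) `|cesaro_weight k l i| = \sum_(m <= i < k.+1) (k%:R^-1 - l%:R^-1).
  apply: eq_big_nat => i /andP[_ ik]; rewrite /cesaro_weight -ltnS ik.
  by rewrite distrC ger0_norm ?subr_ge0.
have -> : \sum_(k.+1 <= i < l.+1) `|cesaro_weight k l i| = \sum_(k.+1 <= i < l.+1) l%:R^-1.
  apply: eq_big_nat => i /andP[ki _]; rewrite /cesaro_weight leqNgt ki subr0.
  by rewrite ger0_norm ?invr_ge0.
by rewrite !sumr_const_nat !mulr_natl subSS.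
Qed.

Lemma norm_cesaro_sub_ge {y c B} {g : nat -> nat} {m k l : nat} :
  l1_spreading_model y c -> injective g ->
  (forall p, (0 < p)%N -> `|y p| <= B) ->
  (forall i, (0 < i)%N -> (0 < g i)%N) ->
  (forall i, (m <= i)%N -> (l.+1 - m <= g i)%N) ->
  (0 < m <= k)%N -> (k <= l)%N ->
  c * ((k.+1 - m)%:R * (k%:R^-1 - l%:R^-1) + (l - k)%:R * l%:R^-1)
    - m.-1%:R * (k%:R^-1 * B)
  <= `|Defs.cesaro (y \o g) l - Defs.cesaro (y \o g) k|.
Proof.
move=> spread g_inj yB g_pos g_adm /andP[m0 mk] kl.
rewrite cesaro_sub // (big_cat_nat _ (n := m)) //=; last by lia.
set head := \sum_(1 <= i < m) _; set tail := \sum_(m <= i < l.+1) _.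
rewrite addrC; apply: le_trans (lerB_normD tail head); apply: lerB.
  rewrite -sum_norm_cesaro_weight; [|lia|lia].
  apply: l1_spreading_model_inj => // [|i]; first exact: iota_uniq.
  rewrite mem_index_iota size_iota => /andP[mi _].
  by rewrite g_pos ?g_adm //; lia.
apply: le_trans (ler_norm_sum _ _ _) _.
rewrite -[m.-1]subn1 mulr_natl -sumr_const_nat.
apply: ler_sum_nat => i /andP[i0 im]; rewrite normrZ.
by apply: ler_pM => //; [apply: norm_cesaro_weight_le; lia | apply/yB/g_pos].
Qed.

Lemma cesaro_cube_gap {y c B} {g : nat -> nat} {j : nat} :
  l1_spreading_model y c -> injective g ->
  (forall p, (0 < p)%N -> `|y p| <= B) ->
  (forall i, (i ^ 3 <= g i)%N) -> (2 <= j)%N ->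
  2 * c - (3 * c + B) / j%:R
  <= `|Defs.cesaro (y \o g) (j ^ 6) - Defs.cesaro (y \o g) (j ^ 3)|.
Proof.
move=> spread g_inj yB g_ge j2.
have g_pos i : (0 < i)%N -> (0 < g i)%N.
  by move=> i0; apply: leq_trans (g_ge i); rewrite expn_gt0 i0.
have g_adm i : ((j ^ 2).+1 <= i)%N -> ((j ^ 6).+1 - (j ^ 2).+1 <= g i)%N.
  move=> ji; apply: leq_trans (g_ge i); rewrite subSS.
  by apply: leq_trans (leq_subr _ _) _; rewrite (expnM j 2 3) leq_exp2r //; lia.
have m_le_k : (0 < (j ^ 2).+1 <= j ^ 3)%N by apply/andP; split => //; nia.
have k_le_l : (j ^ 3 <= j ^ 6)%N by nia.
apply: le_trans (norm_cesaro_sub_ge spread g_inj yB g_pos g_adm m_le_k k_le_l).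
rewrite subSS /= !natrB ?natrX; [|nia|nia].
by apply: cube_weights_ge; [exact: spread.1 | rewrite (ler_nat R 2 j)].
Qed.

Lemma ca_ge z (r : R) :
  (forall n (e : R), (0 < n)%N -> 0 < e ->
    exists k l, [/\ (n <= k)%N, (n <= l)%N & r - e <= `|z k - z l|]) ->
  (r%:E <= ca z)%E.
Proof.
move=> gaps; apply/ereal_infP => _ [n n0 <-]; apply/lee_addgt0Pr => e e0.
have [k [l [nk nl rz]]] := gaps n e n0 e0.
have : (r%:E <= (`|z k - z l| + e)%:E)%E by rewrite lee_fin -lerBlDr.
move=> /le_trans; apply.
by rewrite EFinD leeD2r //; apply: ereal_sup_ubound; exists k => //; exists l.
Qed.

Lemma cesaro_translate {z} (a : X) {q} : (0 < q)%N ->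
  Defs.cesaro z q = Defs.cesaro (fun k => z k - a) q + a.
Proof.
move=> q0; rewrite /Defs.cesaro sumrB sumr_const_nat subn1 succnK scalerBr.
by rewrite -[a *+ q]scaler_nat scalerA mulVf ?scale1r ?subrK // pnatr_eq0 -lt0n.
Qed.

End CesaroSpreading.

Theorem lemma4p5 (R : realType) (X : completeNormedModType R)
  (x : nat -> X) (x0 : X) (c : R) :
  (exists M : R, forall k, (0 < k)%N -> `|x k| <= M) ->
  0 < c ->
  l1_spreading_model (fun k => x k - x0) c ->
  ((2 * c)%:E <= ccat (fun k => x (k ^ 3)%N))%E.
Proof.
move=> [M xM] c0 spread; set y := fun k => x k - x0; set B := M + `|x0|.
have yB p : (0 < p)%N -> `|y p| <= B.
  by move=> p0; apply: le_trans (ler_normB _ _) _; rewrite lerD2r xM.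
have B0 : 0 <= B by rewrite addr_ge0 // (le_trans _ (xM 1%N isT)).
apply/ereal_infP => _ [phi phi_incr <-].
have phi_homo : {homo phi : i j / (i < j)%N} by apply: homo_ltn; [exact: ltn_trans|].
pose g i := (phi i ^ 3)%N.
have g_inj : injective g.
  by move=> i i' /(expIn (isT : (0 < 3)%N)) /(inc_inj (leq_mono phi_homo)).
have g_ge i : (i ^ 3 <= g i)%N.
  by rewrite leq_exp2r //; elim: i => // i ih; apply: leq_ltn_trans ih (phi_incr i).
apply: ca_ge => n e n0 e0.
have [j] := nat_large_div_le n (addr_ge0 (mulr_ge0 (ler0n _ 3) (ltW c0)) B0) e0.
rewrite geq_max => /andP[nj j2] je.
have n_le_jp p : (0 < p)%N -> (n <= j ^ p)%N.
  by move=> p0; apply: leq_trans nj _; rewrite -{1}[j]expn1 leq_pexp2l //; lia.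
exists (j ^ 6)%N, (j ^ 3)%N; split; rewrite ?n_le_jp //.
have j_pos p : (0 < j ^ p)%N by rewrite expn_gt0; lia.
rewrite (cesaro_translate x0 (j_pos 6%N)) (cesaro_translate x0 (j_pos 3%N)).
rewrite opprD addrACA subrr addr0.
by apply: le_trans (cesaro_cube_gap spread g_inj yB g_ge j2); lra.
Qed.
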